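(* Every class $[\mathfrak{p}]\in\mathfrak{F}_4''$ contains a unique quadruple of the form $$p_1=(1,\tan a),\quad p_2=\infty,\quad p_3=(0,0),\quad p_4=(z,t),$$ where $a\in(-\pi/2,\pi/2)$ (in fact $a=\mathbb{A}(p_1,p_2,p_3)$), $z\in\mathbb{C}\setminus\{0\}$, $t\in\mathbb{R}$ and $t\neq |z|^2\tan a$. The map $\mathcal{B}_0:\mathfrak{F}_4''\to\mathcal{C}'(\mathfrak{H}^\star)$, $\mathcal{B}_0([\mathfrak{p}])=(z,t,e^{\tan a})$, is a well-defined bijection onto $$\mathcal{C}'(\mathfrak{H}^\star)=\{(z,t,r)\in(\mathbb{C}\setminus\{0\})\times\mathbb{R}\times\mathbb{R}_{>0}\;:\;\log r\neq t/|z|^2\}.$$ Consequently $\mathfrak{F}_4''$ inherits (by transport of structure via $\mathcal{B}_0$) the Kähler structure of the open subset $\mathcal{C}'(\mathfrak{H}^\star)$ of the Riemannian cone $\mathcal{C}(\mathfrak{H}^\star)$.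
   Context: Let $\mathbb{C}^{2,1}$ denote $\mathbb{C}^3$ with the Hermitian form $\langle \mathbf z,\mathbf w\rangle=z_1\overline{w_3}+z_2\overline{w_2}+z_3\overline{w_1}$. The boundary $\partial\mathbf{H}^2_\mathbb{C}$ of complex hyperbolic plane is the set of complex lines of null vectors; it is identified with $(\mathbb{C}\times\mathbb{R})\cup\{\infty\}$, where $(z,t)$ corresponds to the line spanned by $(-|z|^2+it,\sqrt2 z,1)^T$ and $\infty$ to the line spanned by $(1,0,0)^T$. The group ${\rm PU}(2,1)$ (projectivised unitary group of $\langle\cdot,\cdot\rangle$) acts on $\partial\mathbf{H}^2_\mathbb{C}$. A $\mathbb{C}$-circle is the intersection of $\partial\mathbf{H}^2_\mathbb{C}$ with the projectivisation of a complex 2-dimensional subspace of $\mathbb{C}^{2,1}$ on which the form has signature $(1,1)$ (i.e. the boundary of a complex geodesic). Cartan's angular invariant of a triple of distinct boundary points with lifts $\mathbf p_i$ is $\mathbb{A}(p_1,p_2,p_3)=\arg\left(-\langle\mathbf p_1,\mathbf p_2\rangle\langle\mathbf p_2,\mathbf p_3\rangle\langle\mathbf p_3,\mathbf p_1\rangle\right)\in[-\pi/2,\pi/2]$. Let $\mathfrak{C}_4''$ be the set of ordered quadruples $\mathfrak{p}=(p_1,p_2,p_3,p_4)$ of pairwise distinct points of $\partial\mathbf{H}^2_\mathbb{C}$ such that: $p_1,p_2,p_3$ do not lie on a common $\mathbb{C}$-circle; $p_2,p_3,p_4$ do not lie on a common $\mathbb{C}$-circle; and $p_4$ is not in the orbit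 of $p_1$ under the subgroup of ${\rm PU}(2,1)$ fixing $p_2$ and $p_3$. Let $\mathfrak{F}_4''=\mathfrak{C}_4''/{\rm PU}(2,1)$ (diagonal action). The affine-rotational group $\mathfrak{H}^\star$ is $(\mathbb{C}\setminus\{0\})\times\mathbb{R}$ with product $(z,t)\star(w,s)=(zw,t+s|z|^2)$. On it, with $z=x+iy$, let $\mathbf{X}=x\partial_x+y\partial_y$, $\mathbf{Y}=x\partial_y-y\partial_x-2|z|^2\partial_t$, $\mathbf{T}=x\partial_y-y\partial_x$, let $\omega^\star=\frac{dt+2x\,dy-2y\,dx}{2|z|^2}$, and let $g^\star$ be the Riemannian metric for which $\{\mathbf X,\mathbf Y,\mathbf T\}$ is orthonormal. The Riemannian cone is $\mathcal{C}(\mathfrak{H}^\star)=\mathfrak{H}^\star\times\mathbb{R}_{>0}$ with metric $dr^2+r^2g^\star$, almost complex structure $\mathbb{J}\mathbf X=\mathbf Y$, $\mathbb{J}\mathbf Y=-\mathbf X$, $\mathbb{J}\mathbf T=-r\partial_r$, $\mathbb{J}(r\partial_r)=\mathbf T$, and 2-form $d(r^2\omega^\star/2)$; this is a Kähler manifold. *)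

From Stdlib Require Import Reals.
Open Scope R_scope.

Record C := mkC { re : R; im : R }.
Definition C0 : C := mkC 0 0.
Definition C1 : C := mkC 1 0.
Definition RtoC (r : R) : C := mkC r 0.
Definition Cadd (a b : C) : C := mkC (re a + re b) (im a + im b).
Definition Cmul (a b : C) : C :=
  mkC (re a * re b - im a * im b) (re a * im b + im a * re b).
Definition Copp (a : C) : C := mkC (- re a) (- im a).
Definition Cconj (a : C) : C := mkC (re a) (- im a).
Definition Cnorm2 (a : C) : R := re a * re a + im a * im a.

Record V3 := mkV { c1 : C; c2 : C; c3 : C }.
Definition V0 : V3 := mkV C0 C0 C0.
Definition Vscale (l : C) (v : V3) : V3 :=
  mkV (Cmul l (c1 v)) (Cmul l (c2 v)) (Cmul l (c3 v)).
Definition Vadd (v w : V3) : V3 :=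
  mkV (Cadd (c1 v) (c1 w)) (Cadd (c2 v) (c2 w)) (Cadd (c3 v) (c3 w)).

Definition herm (v w : V3) : C :=
  Cadd (Cadd (Cmul (c1 v) (Cconj (c3 w))) (Cmul (c2 v) (Cconj (c2 w))))
       (Cmul (c3 v) (Cconj (c1 w))).

Definition Mat3 := nat -> nat -> C.
Definition row_app (g : Mat3) (i : nat) (v : V3) : C :=
  Cadd (Cadd (Cmul (g i 0%nat) (c1 v)) (Cmul (g i 1%nat) (c2 v)))
       (Cmul (g i 2%nat) (c3 v)).
Definition Mapp (g : Mat3) (v : V3) : V3 :=
  mkV (row_app g 0%nat v) (row_app g 1%nat v) (row_app g 2%nat v).

(** U(2,1): matrices preserving the Hermitian form (automatically invertible,
    the form being non-degenerate). PU(2,1) acts on boundary points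
    (projective null lines) through U(2,1). *)
Definition unitary21 (g : Mat3) : Prop :=
  forall v w, herm (Mapp g v) (Mapp g w) = herm v w.

(** A boundary point is represented by a lift: a nonzero null vector;
    two lifts represent the same point iff they span the same complex line. *)
Definition is_bpt (v : V3) : Prop := v <> V0 /\ herm v v = C0.
Definition same_line (v w : V3) : Prop :=
  exists l : C, l <> C0 /\ v = Vscale l w.

Definition bpt (z : C) (t : R) : V3 :=
  mkV (mkC (- Cnorm2 z) t) (Cmul (RtoC (sqrt 2)) z) C1.
Definition binf : V3 := mkV C1 C0 C0.

(** complex 2-dim subspace of signature (1,1), given by an orthogonal
    basis u (positive) , v (negative); p lies in it *)
Definition in_span (u v p : V3) : Prop :=
  exists a b : C, p = Vadd (Vscale a u) (Vscale b v).
Definition sig11_basis (u v : V3) : Prop :=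
  re (herm u u) > 0 /\ im (herm u u) = 0 /\
  re (herm v v) < 0 /\ im (herm v v) = 0 /\ herm u v = C0.
Definition on_common_Ccircle (p q r : V3) : Prop :=
  exists u v, sig11_basis u v /\ in_span u v p /\ in_span u v q /\ in_span u v r.

Definition cartan_triple (p1 p2 p3 : V3) : C :=
  Copp (Cmul (Cmul (herm p1 p2) (herm p2 p3)) (herm p3 p1)).
Definition cartan_is (p1 p2 p3 : V3) (a : R) : Prop :=
  - (PI / 2) <= a <= PI / 2 /\
  exists rho : R, rho > 0 /\
    cartan_triple p1 p2 p3 = mkC (rho * cos a) (rho * sin a).

Record Quad := mkQ { q1 : V3; q2 : V3; q3 : V3; q4 : V3 }.

Definition in_C4pp (q : Quad) : Prop :=
  is_bpt (q1 q) /\ is_bpt (q2 q) /\ is_bpt (q3 q) /\ is_bpt (q4 q) /\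
  ~ same_line (q1 q) (q2 q) /\ ~ same_line (q1 q) (q3 q) /\
  ~ same_line (q1 q) (q4 q) /\ ~ same_line (q2 q) (q3 q) /\
  ~ same_line (q2 q) (q4 q) /\ ~ same_line (q3 q) (q4 q) /\
  ~ on_common_Ccircle (q1 q) (q2 q) (q3 q) /\
  ~ on_common_Ccircle (q2 q) (q3 q) (q4 q) /\
  ~ (exists g, unitary21 g /\ same_line (Mapp g (q2 q)) (q2 q) /\
        same_line (Mapp g (q3 q)) (q3 q) /\ same_line (Mapp g (q1 q)) (q4 q)).

Definition equivQ (q q' : Quad) : Prop :=
  exists g, unitary21 g /\
    same_line (Mapp g (q1 q)) (q1 q') /\ same_line (Mapp g (q2 q)) (q2 q') /\
    same_line (Mapp g (q3 q)) (q3 q') /\ same_line (Mapp g (q4 q)) (q4 q').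

Definition normal_quad (a : R) (z : C) (t : R) : Quad :=
  mkQ (bpt C1 (tan a)) binf (bpt C0 0) (bpt z t).

Definition normal_params (a : R) (z : C) (t : R) : Prop :=
  - (PI / 2) < a < PI / 2 /\ z <> C0 /\ t <> Cnorm2 z * tan a.

Definition B0rel (q : Quad) (z : C) (t r : R) : Prop :=
  exists a, normal_params a z t /\ equivQ q (normal_quad a z t) /\
            r = exp (tan a).

Definition in_Cprime (z : C) (t r : R) : Prop :=
  z <> C0 /\ r > 0 /\ ln r <> t / Cnorm2 z.

(** Boundary points are lifted to null vectors of C^{2,1}; infinity is the
    line of [binf] = e1 and the origin (0,0) that of [e3v] = e3.  The proof
    runs in four stages.
    1. Linear algebra: C is a ring, U(2,1) is a group (a form-preserving
       matrix M has the left inverse M# = J M^* J and, by the determinant,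
       M# is also a right inverse), and it acts on lines.
    2. Normalisation: every null line other than infinity is spanned by a
       unique [bpt z t]; Heisenberg translations and the swap e1 <-> e3 show
       U(2,1) is transitive on pairs of distinct points; diagonal matrices
       rescale [bpt z t] to [bpt (n z) (|n|^2 t)].
    3. Rigidity: an element fixing the lines of infinity and of the origin
       is determined, up to the relevant scalars, by the Hermitian products
       with e1 and e3; this yields uniqueness of the normal form and the
       characterisation t = |z|^2 tan a of the excluded orbit.
    4. C-circles (via a determinant) and Cartan's invariant (via its
       behaviour under scaling of lifts) identify the parameters; the
       theorem then follows by transporting the class along exp o tan. *)
From Pilot Require Import Defs.
From Stdlib Require Import Reals Lra Psatz Classical.
Import Defs.
Open Scope R_scope.

Lemma C_ext (a b : C) : re a = re b -> im a = im b -> a = b.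
Proof. destruct a, b; simpl; intros; subst; reflexivity. Qed.

Definition Csub (a b : C) : C := Cadd a (Copp b).

Lemma C_ring : ring_theory C0 C1 Cadd Cmul Csub Copp (@eq C).
Proof. constructor; intros; apply C_ext; simpl; ring. Qed.
Add Ring C_ring : C_ring.

Definition Cinv (a : C) : C := mkC (re a / Cnorm2 a) (- im a / Cnorm2 a).

Lemma Cnorm2_pos (a : C) : a <> C0 -> Cnorm2 a > 0.
Proof.
  destruct a as [x y]; unfold Cnorm2; simpl; intro Ha.
  destruct (Req_dec x 0), (Req_dec y 0); subst; [now destruct Ha | nra ..].
Qed.

Lemma Cinv_l (a : C) : a <> C0 -> Cmul (Cinv a) a = C1.
Proof.
  intro Ha; pose proof (Cnorm2_pos a Ha) as P.
  destruct a as [x y]; unfold Cinv, Cnorm2 in *; simpl in *.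
  apply C_ext; simpl; field; lra.
Qed.

Lemma C1_neq_C0 : C1 <> C0.
Proof. intro H; injection H; lra. Qed.

Lemma Cmul_eq1_neq0 (a b : C) : Cmul a b = C1 -> b <> C0.
Proof. intros H ->; apply C1_neq_C0; rewrite <- H; ring. Qed.

Lemma Cinv_neq0 (a : C) : a <> C0 -> Cinv a <> C0.
Proof.
  intro Ha; apply (Cmul_eq1_neq0 a).
  replace (Cmul a (Cinv a)) with (Cmul (Cinv a) a) by ring; now apply Cinv_l.
Qed.

Lemma Cmul_cancel_r (a b c : C) : c <> C0 -> Cmul a c = Cmul b c -> a = b.
Proof.
  intros Hc E.
  assert (Undo : forall x, x = Cmul (Cmul x c) (Cinv c)).
  { intro x; replace (Cmul (Cmul x c) (Cinv c)) with (Cmul x (Cmul (Cinv c) c)) by ring.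
    rewrite Cinv_l by exact Hc; ring. }
  now rewrite (Undo a), (Undo b), E.
Qed.

Lemma Cmul_conj (l : C) : Cmul l (Cconj l) = RtoC (Cnorm2 l).
Proof. destruct l; apply C_ext; unfold Cnorm2; simpl; ring. Qed.

Lemma Cconj_neq0 (n : C) : n <> C0 -> Cconj n <> C0.
Proof. destruct n as [x y]; intros Hn H; injection H; intros; apply Hn; apply C_ext; simpl; lra. Qed.

Lemma Cnorm2_C1 : Cnorm2 C1 = 1.
Proof. unfold Cnorm2; simpl; ring. Qed.

Lemma V_ext (v w : V3) : c1 v = c1 w -> c2 v = c2 w -> c3 v = c3 w -> v = w.
Proof. destruct v, w; simpl; intros; subst; reflexivity. Qed.

Lemma Vscale_1 (v : V3) : Vscale C1 v = v.
Proof. apply V_ext; simpl; ring. Qed.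

Lemma Vscale_mul (a b : C) (v : V3) : Vscale a (Vscale b v) = Vscale (Cmul a b) v.
Proof. apply V_ext; simpl; ring. Qed.

Lemma sl_refl (v : V3) : same_line v v.
Proof. exists C1; split; [apply C1_neq_C0 | now rewrite Vscale_1]. Qed.

Lemma sl_sym (v w : V3) : same_line v w -> same_line w v.
Proof.
  intros [l [Hl ->]]; exists (Cinv l); split; [now apply Cinv_neq0|].
  now rewrite Vscale_mul, Cinv_l, Vscale_1.
Qed.

Lemma sl_trans (u v w : V3) : same_line u v -> same_line v w -> same_line u w.
Proof.
  intros [l [Hl ->]] [m [Hm ->]]; exists (Cmul l m); split.
  - intro H0; apply Hm; replace m with (Cmul (Cmul (Cinv l) l) m) by (rewrite Cinv_l; auto; ring).
    replace C0 with (Cmul (Cinv l) C0) by ring; rewrite <- H0; ring.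
  - now rewrite Vscale_mul.
Qed.

Lemma sl_scale (l : C) (v : V3) : l <> C0 -> same_line (Vscale l v) v.
Proof. intros; exists l; auto. Qed.

Lemma Mapp_scale (g : Mat3) (l : C) (v : V3) : Mapp g (Vscale l v) = Vscale l (Mapp g v).
Proof. apply V_ext; unfold Mapp, row_app; simpl; ring. Qed.

Lemma Mapp_add (g : Mat3) (v w : V3) : Mapp g (Vadd v w) = Vadd (Mapp g v) (Mapp g w).
Proof. apply V_ext; unfold Mapp, row_app; simpl; ring. Qed.

Lemma Mapp_V0 (g : Mat3) : Mapp g V0 = V0.
Proof. apply V_ext; unfold Mapp, row_app; simpl; ring. Qed.

Lemma sl_Mapp (g : Mat3) (v w : V3) : same_line v w -> same_line (Mapp g v) (Mapp g w).
Proof. intros [l [Hl ->]]; exists l; split; auto; apply Mapp_scale. Qed.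

Definition colv (h : Mat3) (j : nat) : V3 := mkV (h 0%nat j) (h 1%nat j) (h 2%nat j).
Definition Mmul (g h : Mat3) : Mat3 := fun i j => row_app g i (colv h j).

Lemma Mapp_Mmul (g h : Mat3) (v : V3) : Mapp (Mmul g h) v = Mapp g (Mapp h v).
Proof. apply V_ext; unfold Mapp, Mmul, row_app, colv; simpl; ring. Qed.

Lemma unitary_Mmul (g h : Mat3) : unitary21 g -> unitary21 h -> unitary21 (Mmul g h).
Proof. intros Hg Hh v w; now rewrite !Mapp_Mmul, Hg, Hh. Qed.

Definition Idm : Mat3 := fun i j => if Nat.eqb i j then C1 else C0.

Lemma Idm_app (v : V3) : Mapp Idm v = v.
Proof. apply V_ext; unfold Mapp, row_app, Idm; simpl; ring. Qed.

Lemma unitary_Idm : unitary21 Idm.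
Proof. intros v w; now rewrite !Idm_app. Qed.

Lemma herm_scale (a b : C) (v w : V3) :
  herm (Vscale a v) (Vscale b w) = Cmul (Cmul a (Cconj b)) (herm v w).
Proof.
  destruct a, b, v as [[] [] []], w as [[] [] []].
  apply C_ext; unfold herm, Vscale, Cmul, Cadd, Cconj; simpl; ring.
Qed.

(** * U(2,1) is a group *)

(** The J-adjoint M# = J M^* J, where J swaps the first and third coordinates. *)
Definition hinv (M : Mat3) : Mat3 := fun i j => Cconj (M (2 - j)%nat (2 - i)%nat).

Definition ej (j : nat) : V3 :=
  match j with
  | 0%nat => mkV C1 C0 C0
  | 1%nat => mkV C0 C1 C0
  | _ => mkV C0 C0 C1
  end.

(** The coordinates of M# v are the products <v, M e_k>; hence M# M = 1
    whenever M preserves the form. *)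
Lemma hinv_left (M : Mat3) : unitary21 M -> forall v, Mapp (hinv M) (Mapp M v) = v.
Proof.
  intros HM v.
  assert (Coords : Mapp (hinv M) (Mapp M v) =
           mkV (herm (Mapp M v) (Mapp M (ej 2))) (herm (Mapp M v) (Mapp M (ej 1)))
               (herm (Mapp M v) (Mapp M (ej 0)))).
  { apply V_ext; apply C_ext;
      unfold hinv, herm, Mapp, row_app, ej, Cconj, Cadd, Cmul; simpl; ring. }
  rewrite Coords, !HM; apply V_ext; apply C_ext; unfold herm, ej; simpl; ring.
Qed.

Definition comp (i : nat) (v : V3) : C :=
  match i with 0%nat => c1 v | 1%nat => c2 v | _ => c3 v end.

Definition matrix_of (f : V3 -> V3) : Mat3 := fun i j => comp i (f (ej j)).

Definition det3 (M : Mat3) : C :=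
  Cadd (Csub (Cmul (M 0%nat 0%nat) (Csub (Cmul (M 1%nat 1%nat) (M 2%nat 2%nat))
                                         (Cmul (M 1%nat 2%nat) (M 2%nat 1%nat))))
             (Cmul (M 0%nat 1%nat) (Csub (Cmul (M 1%nat 0%nat) (M 2%nat 2%nat))
                                         (Cmul (M 1%nat 2%nat) (M 2%nat 0%nat)))))
       (Cmul (M 0%nat 2%nat) (Csub (Cmul (M 1%nat 0%nat) (M 2%nat 1%nat))
                                   (Cmul (M 1%nat 1%nat) (M 2%nat 0%nat)))).

Definition adj (M : Mat3) : Mat3 := fun i j =>
  match i, j with
  | 0%nat, 0%nat => Csub (Cmul (M 1%nat 1%nat) (M 2%nat 2%nat)) (Cmul (M 1%nat 2%nat) (M 2%nat 1%nat))
  | 0%nat, 1%nat => Csub (Cmul (M 0%nat 2%nat) (M 2%nat 1%nat)) (Cmul (M 0%nat 1%nat) (M 2%nat 2%nat))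
  | 0%nat, _ => Csub (Cmul (M 0%nat 1%nat) (M 1%nat 2%nat)) (Cmul (M 0%nat 2%nat) (M 1%nat 1%nat))
  | 1%nat, 0%nat => Csub (Cmul (M 1%nat 2%nat) (M 2%nat 0%nat)) (Cmul (M 1%nat 0%nat) (M 2%nat 2%nat))
  | 1%nat, 1%nat => Csub (Cmul (M 0%nat 0%nat) (M 2%nat 2%nat)) (Cmul (M 0%nat 2%nat) (M 2%nat 0%nat))
  | 1%nat, _ => Csub (Cmul (M 0%nat 2%nat) (M 1%nat 0%nat)) (Cmul (M 0%nat 0%nat) (M 1%nat 2%nat))
  | _, 0%nat => Csub (Cmul (M 1%nat 0%nat) (M 2%nat 1%nat)) (Cmul (M 1%nat 1%nat) (M 2%nat 0%nat))
  | _, 1%nat => Csub (Cmul (M 0%nat 1%nat) (M 2%nat 0%nat)) (Cmul (M 0%nat 0%nat) (M 2%nat 1%nat))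
  | _, _ => Csub (Cmul (M 0%nat 0%nat) (M 1%nat 1%nat)) (Cmul (M 0%nat 1%nat) (M 1%nat 0%nat))
  end.

Lemma adj_right (M : Mat3) (w : V3) : Mapp M (Mapp (adj M) w) = Vscale (det3 M) w.
Proof. apply V_ext; unfold Mapp, row_app, adj, det3, Csub; simpl; ring. Qed.

Lemma det_mul (N M : Mat3) :
  det3 (matrix_of (fun v => Mapp N (Mapp M v))) = Cmul (det3 N) (det3 M).
Proof. unfold det3, matrix_of, comp, Mapp, row_app, ej, Csub; simpl; ring. Qed.

Lemma det_id : det3 (matrix_of (fun v => v)) = C1.
Proof. unfold det3, matrix_of, comp, ej, Csub; simpl; ring. Qed.

(** Since det(M#) det(M) = 1, M is onto and M# is also a right inverse. *)
Lemma hinv_right (M : Mat3) : unitary21 M -> forall v, Mapp M (Mapp (hinv M) v) = v.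
Proof.
  intros HM w.
  assert (Hdet : Cmul (det3 (hinv M)) (det3 M) = C1).
  { rewrite <- det_mul, <- det_id; unfold det3, matrix_of.
    now rewrite !(hinv_left M HM). }
  set (s := Vscale (Cinv (det3 M)) (Mapp (adj M) w)).
  assert (Hs : Mapp M s = w).
  { unfold s; rewrite Mapp_scale, adj_right, Vscale_mul, Cinv_l; [apply Vscale_1|].
    exact (Cmul_eq1_neq0 _ _ Hdet). }
  rewrite <- Hs, hinv_left; auto.
Qed.

Lemma hinv_unitary (M : Mat3) : unitary21 M -> unitary21 (hinv M).
Proof.
  intros HM v w; rewrite <- (HM (Mapp (hinv M) v)), !hinv_right; auto.
Qed.

Lemma unitary_null (g : Mat3) (v : V3) : unitary21 g -> is_bpt v -> is_bpt (Mapp g v).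
Proof.
  intros Hg [Hn Hh]; split; [|now rewrite Hg].
  intro H; apply Hn; rewrite <- (hinv_left g Hg v), H; apply Mapp_V0.
Qed.

Lemma sl_unMapp (g : Mat3) (v w : V3) :
  unitary21 g -> same_line (Mapp g v) (Mapp g w) -> same_line v w.
Proof.
  intros Hg H; rewrite <- (hinv_left g Hg v), <- (hinv_left g Hg w); now apply sl_Mapp.
Qed.

(** * Boundary points in horospherical coordinates *)

Definition e3v : V3 := mkV C0 C0 C1.

Lemma e3_eq : bpt C0 0 = e3v.
Proof. apply V_ext; apply C_ext; simpl; unfold Cnorm2; simpl; ring. Qed.

Lemma sqrt2_pos : sqrt 2 > 0.
Proof. apply sqrt_lt_R0; lra. Qed.

Lemma sqrt2_sq : sqrt 2 * sqrt 2 = 2.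
Proof. apply sqrt_sqrt; lra. Qed.

(** The real part of <v,v>; the imaginary part vanishes identically. *)
Lemma herm_re (v : V3) : re (herm v v) =
  2 * (re (c1 v) * re (c3 v) + im (c1 v) * im (c3 v)) + Cnorm2 (c2 v).
Proof. destruct v as [[] [] []]; unfold herm, Cnorm2; simpl; ring. Qed.

Lemma bpt_null (z : C) (t : R) : is_bpt (bpt z t).
Proof.
  split.
  - intro H; apply (f_equal c3) in H; exact (C1_neq_C0 H).
  - destruct z as [x y]; apply C_ext; unfold herm; simpl; unfold Cnorm2; simpl; [|ring].
    transitivity ((sqrt 2 * sqrt 2 - 2) * (x * x + y * y)); [ring | rewrite sqrt2_sq; ring].
Qed.

Lemma binf_null : is_bpt binf.
Proof.
  split; [intro H; apply (f_equal c1) in H; exact (C1_neq_C0 H)|].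
  apply C_ext; unfold herm; simpl; ring.
Qed.

Lemma not_binf_c3 (v : V3) : is_bpt v -> ~ same_line v binf -> c3 v <> C0.
Proof.
  intros [Hn Hh] Hs H3; apply Hs.
  assert (H2 : c2 v = C0).
  { pose proof (herm_re v) as R; rewrite Hh, H3 in R; simpl in R.
    destruct (c2 v) as [x y]; unfold Cnorm2 in R; simpl in R; apply C_ext; simpl; nra. }
  exists (c1 v); split.
  - intro H1; apply Hn; apply V_ext; simpl; auto.
  - apply V_ext; simpl; [ring | rewrite H2; ring | rewrite H3; ring].
Qed.

Lemma bpt_of_normalized (y : V3) : herm y y = C0 -> c3 y = C1 ->
  y = bpt (Cmul (RtoC (/ sqrt 2)) (c2 y)) (im (c1 y)).
Proof.
  intros Hh H3; pose proof (herm_re y) as R; rewrite Hh, H3 in R; simpl in R.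
  pose proof sqrt2_pos; pose proof sqrt2_sq.
  destruct y as [[a b] [c d] y3]; simpl in *; subst y3.
  unfold bpt, Cnorm2 in *; simpl in *.
  assert (Hi : / sqrt 2 * / sqrt 2 = / 2) by (rewrite <- Rinv_mult; congruence).
  apply V_ext; simpl; apply C_ext; simpl; try ring.
  - transitivity (- (c * c + d * d) * (/ sqrt 2 * / sqrt 2)); [rewrite Hi; lra | ring].
  - field; lra.
  - field; lra.
Qed.

Lemma bpt_representative (v : V3) : is_bpt v -> ~ same_line v binf ->
  exists z t, same_line v (bpt z t).
Proof.
  intros Hv Hb; pose proof (not_binf_c3 v Hv Hb) as H3; destruct Hv as [_ Hh].
  set (y := Vscale (Cinv (c3 v)) v).
  assert (Hy3 : c3 y = C1) by (simpl; now apply Cinv_l).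
  assert (Hyh : herm y y = C0) by (unfold y; rewrite herm_scale, Hh; ring).
  exists (Cmul (RtoC (/ sqrt 2)) (c2 y)), (im (c1 y)).
  rewrite <- bpt_of_normalized by assumption.
  apply sl_sym, sl_scale, Cinv_neq0, H3.
Qed.

Lemma sl_bpt (z : C) (t : R) (z' : C) (t' : R) :
  same_line (bpt z t) (bpt z' t') -> z = z' /\ t = t'.
Proof.
  intros [l [_ H]].
  assert (Hl : l = C1) by (apply (f_equal c3) in H; simpl in H; rewrite H; ring).
  subst l; rewrite Vscale_1 in H.
  split.
  - apply (f_equal c2) in H; simpl in H; pose proof sqrt2_pos.
    destruct z, z'; injection H; intros; apply C_ext; simpl; nra.
  - now apply (f_equal (fun v => im (c1 v))) in H.
Qed.

Lemma sl_bpt_binf (z : C) (t : R) : ~ same_line (bpt z t) binf.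
Proof.
  intros [l [_ H]]; apply (f_equal c3) in H; simpl in H.
  apply C1_neq_C0; rewrite H; ring.
Qed.

Lemma sl_binf_bpt (z : C) (t : R) : ~ same_line binf (bpt z t).
Proof. intro H; exact (sl_bpt_binf z t (sl_sym _ _ H)). Qed.

(** * Transitivity of U(2,1) on pairs of boundary points *)

Definition Jm : Mat3 := fun i j =>
  match i, j with
  | 0%nat, 2%nat => C1 | 1%nat, 1%nat => C1 | 2%nat, 0%nat => C1 | _, _ => C0 end.

Lemma Jm_app (v : V3) : Mapp Jm v = mkV (c3 v) (c2 v) (c1 v).
Proof. apply V_ext; unfold Mapp, row_app; simpl; ring. Qed.

Lemma Jm_unitary : unitary21 Jm.
Proof. intros v w; rewrite !Jm_app; unfold herm; simpl; ring. Qed.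

(** The Heisenberg translation fixing infinity and taking the null vector [y]
    (normalised by c3 y = 1) to e3. *)
Definition heis (y : V3) : Mat3 := fun i j =>
  match i, j with
  | 0%nat, 0%nat => C1 | 0%nat, 1%nat => Cconj (c2 y) | 0%nat, 2%nat => Cconj (c1 y)
  | 1%nat, 1%nat => C1 | 1%nat, 2%nat => Copp (c2 y) | 2%nat, 2%nat => C1
  | _, _ => C0 end.

Lemma heis_unitary (y : V3) : herm y y = C0 -> c3 y = C1 -> unitary21 (heis y).
Proof.
  intros Hh H3 v w; pose proof (herm_re y) as R; rewrite Hh, H3 in R; simpl in R.
  destruct y as [[a b] [c d] y3]; simpl in *; unfold Cnorm2 in R; simpl in R.
  assert (Ha : a = - (c * c + d * d) / 2) by lra; subst a.
  destruct v as [[] [] []], w as [[] [] []].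
  unfold herm, Mapp, row_app, heis; simpl; apply C_ext; simpl; field.
Qed.

Lemma heis_binf (y : V3) : Mapp (heis y) binf = binf.
Proof. apply V_ext; unfold Mapp, row_app, heis, binf; simpl; ring. Qed.

Lemma heis_y (y : V3) : herm y y = C0 -> c3 y = C1 -> Mapp (heis y) y = e3v.
Proof.
  intros Hh H3; pose proof (herm_re y) as R; rewrite Hh, H3 in R; simpl in R.
  destruct y as [[a b] [c d] y3]; simpl in *; subst y3; unfold Cnorm2 in R; simpl in R.
  apply V_ext; apply C_ext; unfold Mapp, row_app, heis, e3v; simpl; lra.
Qed.

Lemma stab_binf_transitive (y : V3) : is_bpt y -> ~ same_line y binf ->
  exists g, unitary21 g /\ Mapp g binf = binf /\ same_line (Mapp g y) e3v.
Proof.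
  intros Hy Hb; destruct (bpt_representative y Hy Hb) as [z [t Hzt]].
  destruct (bpt_null z t) as [_ Hh].
  exists (heis (bpt z t)); split; [|split].
  - now apply heis_unitary.
  - apply heis_binf.
  - rewrite <- (heis_y (bpt z t)) by auto; now apply sl_Mapp.
Qed.

Lemma frame (x y : V3) : is_bpt x -> is_bpt y -> ~ same_line x y ->
  exists g, unitary21 g /\ same_line (Mapp g x) binf /\ same_line (Mapp g y) e3v.
Proof.
  intros Hx Hy Hxy.
  destruct (classic (same_line x binf)) as [Hb|Hb].
  - assert (Hyb : ~ same_line y binf) by (intro H; apply Hxy; eauto using sl_trans, sl_sym).
    destruct (stab_binf_transitive y Hy Hyb) as [g [Hg [Hgb Hgy]]].
    exists g; repeat split; auto.
    rewrite <- Hgb; now apply sl_Mapp.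
  - destruct (stab_binf_transitive x Hx Hb) as [g0 [Hg0 [_ Hg0x]]].
    set (g1 := Mmul Jm g0).
    assert (Hg1 : unitary21 g1) by (apply unitary_Mmul; [apply Jm_unitary | exact Hg0]).
    assert (Hg1x : same_line (Mapp g1 x) binf).
    { unfold g1; rewrite Mapp_Mmul; eapply sl_trans; [apply sl_Mapp; exact Hg0x|].
      rewrite Jm_app; apply sl_refl. }
    assert (Hy1b : ~ same_line (Mapp g1 y) binf).
    { intro H; apply Hxy, sl_sym, (sl_unMapp g1); eauto using sl_trans, sl_sym. }
    destruct (stab_binf_transitive _ (unitary_null g1 y Hg1 Hy) Hy1b)
      as [g2 [Hg2 [Hg2b Hg2y]]].
    exists (Mmul g2 g1); rewrite !Mapp_Mmul; repeat split; auto.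
    + now apply unitary_Mmul.
    + rewrite <- Hg2b; now apply sl_Mapp.
Qed.

(** * Diagonal elements: dilations of the Heisenberg group *)

Definition Dg (n : C) : Mat3 := fun i j =>
  match i, j with
  | 0%nat, 0%nat => Cinv (Cconj n) | 1%nat, 1%nat => C1 | 2%nat, 2%nat => n
  | _, _ => C0 end.

Lemma Dg_app (n : C) (v : V3) :
  Mapp (Dg n) v = mkV (Cmul (Cinv (Cconj n)) (c1 v)) (c2 v) (Cmul n (c3 v)).
Proof. apply V_ext; unfold Mapp, row_app; simpl; ring. Qed.

Lemma Dg_unitary (n : C) : n <> C0 -> unitary21 (Dg n).
Proof.
  intros Hn v w; rewrite !Dg_app; pose proof (Cnorm2_pos n Hn) as P.
  destruct n as [a b]; unfold Cnorm2 in P; simpl in P.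
  destruct v as [[] [] []], w as [[] [] []].
  unfold herm, Cinv, Cnorm2; simpl; apply C_ext; simpl; field; lra.
Qed.

Lemma Dg_binf (n : C) : Mapp (Dg n) binf = Vscale (Cinv (Cconj n)) binf.
Proof. rewrite Dg_app; apply V_ext; simpl; ring. Qed.

Lemma Dg_e3 (n : C) : Mapp (Dg n) e3v = Vscale n e3v.
Proof. rewrite Dg_app; apply V_ext; simpl; ring. Qed.

Lemma Dg_bpt (n z : C) (t : R) : n <> C0 ->
  Mapp (Dg n) (bpt (Cmul n z) (Cnorm2 n * t)) = Vscale n (bpt z t).
Proof.
  intro Hn; rewrite Dg_app; pose proof (Cnorm2_pos n Hn) as P.
  destruct n as [a b], z as [x y]; unfold Cnorm2 in *; simpl in *.
  apply V_ext; unfold bpt, Cinv, Cnorm2; simpl; apply C_ext; simpl; field; lra.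
Qed.

(** * Rigidity of the stabiliser of infinity and the origin *)

Lemma herm_binf_e3 : herm binf e3v = C1.
Proof. apply C_ext; unfold herm; simpl; ring. Qed.

Lemma herm_bpt_binf (z : C) (t : R) : herm (bpt z t) binf = C1.
Proof. apply C_ext; unfold herm; simpl; ring. Qed.

Lemma herm_bpt_e3 (z : C) (t : R) : herm (bpt z t) e3v = mkC (- Cnorm2 z) t.
Proof. apply C_ext; unfold herm; simpl; ring. Qed.

(** If k maps e1, e3 and [bpt z t] to multiples of e1, e3 and [bpt z' t'],
    the products <.,e1> and <.,e3> force the last two scalars to agree, and
    (z,t) is the image of (z',t') under a real dilation of factor |beta|. *)
Lemma stab_scaling (k : Mat3) (al be ga z : C) (t : R) (z' : C) (t' : R) :
  unitary21 k -> Mapp k binf = Vscale al binf -> Mapp k e3v = Vscale be e3v ->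
  Mapp k (bpt z t) = Vscale ga (bpt z' t') ->
  ga = be /\ Cmul be (Cconj al) = C1 /\
  Cnorm2 z = Cnorm2 be * Cnorm2 z' /\ t = Cnorm2 be * t'.
Proof.
  intros Hk Hb He Hp.
  pose proof (Hk binf e3v) as F1; rewrite Hb, He, herm_scale, herm_binf_e3 in F1.
  pose proof (Hk (bpt z t) binf) as F2; rewrite Hp, Hb, herm_scale, !herm_bpt_binf in F2.
  pose proof (Hk (bpt z t) e3v) as F3; rewrite Hp, He, herm_scale, !herm_bpt_e3 in F3.
  assert (Hbe : Cmul be (Cconj al) = C1).
  { replace (Cmul be (Cconj al)) with (Cconj (Cmul (Cmul al (Cconj be)) C1))
      by (apply C_ext; simpl; ring).
    rewrite F1; apply C_ext; simpl; ring. }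
  assert (Hga : ga = be).
  { apply (Cmul_cancel_r _ _ (Cconj al)); [exact (Cmul_eq1_neq0 _ _ Hbe)|].
    rewrite Hbe, <- F2; ring. }
  subst ga; rewrite Cmul_conj in F3.
  split; [reflexivity | split; [exact Hbe|]].
  split; [apply (f_equal re) in F3 | apply (f_equal im) in F3]; simpl in F3; lra.
Qed.

(** Every finite point is a combination of e1, e3 and [bpt C1 tau]; hence a
    linear map scaling these three by the same factor scales every lift. *)
Lemma bpt_decompose (tau : R) (z : C) (t : R) :
  bpt z t = Vadd (Vadd (Vscale (Csub (mkC (- Cnorm2 z) t) (Cmul z (mkC (- Cnorm2 C1) tau))) binf)
                       (Vscale z (bpt C1 tau)))
                 (Vscale (Csub C1 z) e3v).
Proof. apply V_ext; unfold Vadd, Vscale, bpt, binf, e3v, Csub; cbn [c1 c2 c3]; ring. Qed.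

Lemma rigid (k : Mat3) (tau tau' : R) (z : C) (t : R) (z' : C) (t' : R) :
  unitary21 k ->
  same_line (Mapp k binf) binf -> same_line (Mapp k e3v) e3v ->
  same_line (Mapp k (bpt C1 tau)) (bpt C1 tau') ->
  same_line (Mapp k (bpt z t)) (bpt z' t') ->
  tau = tau' /\ z = z' /\ t = t'.
Proof.
  intros Hk [al [Hal Hb]] [be [Hbe He]] [ga [_ Hp]] [de [_ Hq]].
  destruct (stab_scaling k al be ga C1 tau C1 tau' Hk Hb He Hp) as [-> [Hinv [N1 T]]].
  rewrite Cnorm2_C1, Rmult_1_r in N1; rewrite <- N1, Rmult_1_l in T; subst tau'.
  assert (Hal_be : al = be).
  { assert (Hconj : Cconj al = Cconj be).
    { apply (Cmul_cancel_r _ _ be Hbe).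
      replace (Cmul (Cconj al) be) with (Cmul be (Cconj al)) by ring.
      replace (Cmul (Cconj be) be) with (Cmul be (Cconj be)) by ring.
      rewrite Hinv, Cmul_conj, <- N1; apply C_ext; simpl; ring. }
    destruct al, be; injection Hconj; intros; apply C_ext; simpl; lra. }
  subst al.
  assert (Hk4 : Mapp k (bpt z t) = Vscale be (bpt z t)).
  { rewrite (bpt_decompose tau) at 1; rewrite !Mapp_add, !Mapp_scale, Hb, He, Hp.
    rewrite (bpt_decompose tau z t); apply V_ext; cbn [Vadd Vscale c1 c2 c3]; ring. }
  rewrite Hk4 in Hq.
  assert (Hde : be = de).
  { apply (f_equal c3) in Hq; simpl in Hq.
    transitivity (Cmul be C1); [ring | rewrite Hq; ring]. }
  subst de.
  split; [reflexivity|].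
  apply sl_bpt; exists C1; split; [apply C1_neq_C0|].
  apply (f_equal (Vscale (Cinv be))) in Hq.
  rewrite !Vscale_mul, Cinv_l, !Vscale_1 in Hq by exact Hbe.
  now rewrite Vscale_1.
Qed.

Lemma stab_orbit_locus (k : Mat3) (tau : R) (z : C) (t : R) : unitary21 k ->
  same_line (Mapp k binf) binf -> same_line (Mapp k e3v) e3v ->
  same_line (Mapp k (bpt C1 tau)) (bpt z t) -> t = Cnorm2 z * tau.
Proof.
  intros Hk [al [_ Hb]] [be [_ He]] [ga [_ Hp]].
  destruct (stab_scaling k al be ga C1 tau z t Hk Hb He Hp) as [_ [_ [N1 T]]].
  rewrite Cnorm2_C1 in N1; rewrite T.
  replace (Cnorm2 z * (Cnorm2 be * t)) with ((Cnorm2 be * Cnorm2 z) * t) by ring.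
  rewrite <- N1; ring.
Qed.

Lemma stab_orbit_fill (tau : R) (z : C) : z <> C0 ->
  exists k, unitary21 k /\ same_line (Mapp k binf) binf /\ same_line (Mapp k e3v) e3v /\
    same_line (Mapp k (bpt C1 tau)) (bpt z (Cnorm2 z * tau)).
Proof.
  intro Hz; pose proof (Cinv_neq0 z Hz) as Hiz.
  exists (Dg (Cinv z)); split; [now apply Dg_unitary|].
  rewrite Dg_binf, Dg_e3; split; [|split].
  - apply sl_scale, Cinv_neq0, Cconj_neq0, Hiz.
  - now apply sl_scale.
  - replace (bpt C1 tau) with (bpt (Cmul (Cinv z) z) (Cnorm2 (Cinv z) * (Cnorm2 z * tau))).
    + rewrite Dg_bpt by exact Hiz; now apply sl_scale.
    + pose proof (Cnorm2_pos z Hz) as P; rewrite Cinv_l by exact Hz.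
      f_equal; destruct z as [x y]; unfold Cinv, Cnorm2 in *; simpl in *; field; lra.
Qed.

Lemma conj_moves (G k : Mat3) (x x' y y' : V3) : unitary21 G ->
  same_line (Mapp G x) x' -> same_line (Mapp G y) y' -> same_line (Mapp k x') y' ->
  same_line (Mapp (Mmul (hinv G) (Mmul k G)) x) y.
Proof.
  intros HG Hx Hy Hk; rewrite !Mapp_Mmul.
  rewrite <- (hinv_left G HG y); apply sl_Mapp.
  eapply sl_trans; [apply sl_Mapp; exact Hx|].
  eapply sl_trans; [exact Hk | now apply sl_sym].
Qed.

(** * C-circles *)

(** Points whose images under some G in U(2,1) lie in the plane c2 = 0 (the
    complex geodesic spanned by e1 and e3) lie on a common C-circle. *)
Lemma Ccircle_of_plane (G : Mat3) (p q r : V3) : unitary21 G ->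
  c2 (Mapp G p) = C0 -> c2 (Mapp G q) = C0 -> c2 (Mapp G r) = C0 ->
  on_common_Ccircle p q r.
Proof.
  intros HG Hp Hq Hr.
  set (N := hinv G); set (u := Mapp N (mkV C1 C0 C1)); set (v := Mapp N (mkV C1 C0 (Copp C1))).
  assert (Hspan : forall x, c2 (Mapp G x) = C0 -> in_span u v x).
  { intros x Hx; set (y := Mapp G x) in *.
    exists (Cmul (RtoC (/ 2)) (Cadd (c1 y) (c3 y))), (Cmul (RtoC (/ 2)) (Csub (c1 y) (c3 y))).
    unfold u, v; rewrite <- !Mapp_scale, <- Mapp_add, <- (hinv_left G HG x); fold y N; f_equal.
    destruct y as [[a b] [c d] [e f]]; simpl in Hx; injection Hx; intros; subst.
    apply V_ext; simpl; apply C_ext; simpl; field. }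
  exists u, v; split; [|auto].
  unfold sig11_basis, u, v, N; rewrite !(hinv_unitary G HG); unfold herm; simpl.
  repeat split; try lra; apply C_ext; simpl; ring.
Qed.

Definition det3v (x y z : V3) : C :=
  det3 (fun i j => comp i (match j with 0%nat => x | 1%nat => y | _ => z end)).

(** Three points of a C-circle lie in a 2-dimensional subspace. *)
Lemma Ccircle_det (p q r : V3) : on_common_Ccircle p q r -> det3v p q r = C0.
Proof.
  intros [u [v [_ [[a1 [b1 ->]] [[a2 [b2 ->]] [a3 [b3 ->]]]]]]].
  unfold det3v, det3, comp, Csub; simpl; ring.
Qed.

Lemma not_Ccircle_first (p : V3) : c2 p <> C0 -> ~ on_common_Ccircle p binf e3v.
Proof.
  intros Hp H; apply Hp; apply Ccircle_det in H.
  transitivity (Copp (det3v p binf e3v)); [unfold det3v, det3, comp, Csub; simpl; ring|].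
  rewrite H; ring.
Qed.

Lemma not_Ccircle_last (p : V3) : c2 p <> C0 -> ~ on_common_Ccircle binf e3v p.
Proof.
  intros Hp H; apply Hp; apply Ccircle_det in H.
  transitivity (Copp (det3v binf e3v p)); [unfold det3v, det3, comp, Csub; simpl; ring|].
  rewrite H; ring.
Qed.

Lemma c2_bpt_neq0 (z : C) (t : R) : z <> C0 -> c2 (bpt z t) <> C0.
Proof.
  destruct z as [x y]; intros Hz H; injection H; intros; pose proof sqrt2_pos.
  apply Hz; apply C_ext; simpl; nra.
Qed.

Lemma c2_same_line (v w : V3) : same_line v w -> c2 w = C0 -> c2 v = C0.
Proof. intros [l [_ ->]] H; simpl; rewrite H; ring. Qed.

(** * Cartan's angular invariant *)

Lemma RtoC_mul (a b : R) : RtoC (a * b) = Cmul (RtoC a) (RtoC b).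
Proof. apply C_ext; simpl; ring. Qed.

(** Under U(2,1) and rescaling of the lifts the triple product only changes
    by a positive factor, so its argument is an invariant. *)
Lemma cartan_transport (G : Mat3) (p1 p2 p3 N1 N2 N3 : V3) : unitary21 G ->
  same_line (Mapp G p1) N1 -> same_line (Mapp G p2) N2 -> same_line (Mapp G p3) N3 ->
  exists K, K > 0 /\ cartan_triple p1 p2 p3 = Cmul (RtoC K) (cartan_triple N1 N2 N3).
Proof.
  intros HG [l1 [Hl1 E1]] [l2 [Hl2 E2]] [l3 [Hl3 E3]].
  exists (Cnorm2 l1 * Cnorm2 l2 * Cnorm2 l3); split.
  - pose proof (Cnorm2_pos l1 Hl1); pose proof (Cnorm2_pos l2 Hl2);
      pose proof (Cnorm2_pos l3 Hl3); apply Rmult_gt_0_compat; [apply Rmult_gt_0_compat|]; auto.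
  - unfold cartan_triple.
    rewrite <- (HG p1 p2), <- (HG p2 p3), <- (HG p3 p1), E1, E2, E3, !herm_scale.
    rewrite !RtoC_mul, <- !Cmul_conj; ring.
Qed.

Lemma cartan_normal (tau : R) : cartan_triple (bpt C1 tau) binf e3v = mkC 1 tau.
Proof. apply C_ext; unfold cartan_triple, herm, bpt, Cnorm2; simpl; ring. Qed.

Lemma cartan_is_atan (p1 p2 p3 : V3) (K tau : R) : K > 0 ->
  cartan_triple p1 p2 p3 = Cmul (RtoC K) (mkC 1 tau) -> cartan_is p1 p2 p3 (atan tau).
Proof.
  intros HK E; pose proof (atan_bound tau) as AB.
  assert (Hc : 0 < cos (atan tau)) by (apply cos_gt_0; lra).
  split; [lra|].
  exists (K / cos (atan tau)); split; [apply Rdiv_lt_0_compat; lra|].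
  rewrite E; apply C_ext; simpl.
  - field; lra.
  - rewrite <- (tan_atan tau) at 1; unfold tan; field; lra.
Qed.

(** * The normal form *)

(** Three points not on a C-circle can be moved to (1, tau), infinity and
    the origin: first move the last two, then dilate the first to |z| = 1
    (it is not on the geodesic c2 = 0, i.e. z <> 0). *)
Lemma normalize_triple (p1 p2 p3 : V3) :
  is_bpt p1 -> is_bpt p2 -> is_bpt p3 -> ~ same_line p1 p2 -> ~ same_line p2 p3 ->
  ~ on_common_Ccircle p1 p2 p3 ->
  exists G tau, unitary21 G /\ same_line (Mapp G p1) (bpt C1 tau) /\
    same_line (Mapp G p2) binf /\ same_line (Mapp G p3) e3v.
Proof.
  intros H1 H2 H3 N12 N23 C123.
  destruct (frame p2 p3 H2 H3 N23) as [g [Hg [Hg2 Hg3]]].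
  assert (Hy1b : ~ same_line (Mapp g p1) binf).
  { intro H; apply N12, (sl_unMapp g); eauto using sl_trans, sl_sym. }
  destruct (bpt_representative _ (unitary_null g p1 Hg H1) Hy1b) as [w [s Hws]].
  assert (Hw : w <> C0).
  { intros ->; apply C123, (Ccircle_of_plane g); eauto using c2_same_line.
    apply (c2_same_line _ _ Hws); simpl; ring. }
  exists (Mmul (Dg w) g), (s / Cnorm2 w).
  rewrite !Mapp_Mmul; split; [apply unitary_Mmul; [now apply Dg_unitary | exact Hg]|].
  split; [|split].
  - replace (bpt w s) with (bpt (Cmul w C1) (Cnorm2 w * (s / Cnorm2 w))) in Hws.
    + eapply sl_trans; [apply sl_Mapp; exact Hws|].
      rewrite Dg_bpt by exact Hw; now apply sl_scale.
    + pose proof (Cnorm2_pos w Hw); f_equal; [ring | field; lra].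
  - eapply sl_trans; [apply sl_Mapp; exact Hg2|].
    rewrite Dg_binf; apply sl_scale, Cinv_neq0, Cconj_neq0, Hw.
  - eapply sl_trans; [apply sl_Mapp; exact Hg3|].
    rewrite Dg_e3; now apply sl_scale.
Qed.

Lemma exist_normal (q : Quad) : in_C4pp q ->
  exists a z t, normal_params a z t /\ equivQ q (normal_quad a z t) /\
    cartan_is (q1 q) (q2 q) (q3 q) a.
Proof.
  intros (H1 & H2 & H3 & H4 & N12 & N13 & N14 & N23 & N24 & N34 & C123 & C234 & Orb).
  destruct (normalize_triple _ _ _ H1 H2 H3 N12 N23 C123) as [G [tau [HG [G1 [G2 G3]]]]].
  assert (Hy4b : ~ same_line (Mapp G (q4 q)) binf).
  { intro H; apply N24, (sl_unMapp G); eauto using sl_trans, sl_sym. }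
  destruct (bpt_representative _ (unitary_null G _ HG H4) Hy4b) as [z [t G4]].
  assert (Hz : z <> C0).
  { intros ->; apply C234, (Ccircle_of_plane G); eauto using c2_same_line.
    apply (c2_same_line _ _ G4); simpl; ring. }
  assert (Ht : t <> Cnorm2 z * tau).
  { intros ->; apply Orb.
    destruct (stab_orbit_fill tau z Hz) as [k [Hk [K2 [K3 K1]]]].
    exists (Mmul (hinv G) (Mmul k G)); split.
    - apply unitary_Mmul; [now apply hinv_unitary | now apply unitary_Mmul].
    - repeat split; eapply conj_moves; eauto. }
  pose proof (atan_bound tau) as AB.
  exists (atan tau), z, t; split; [|split].
  - unfold normal_params; rewrite tan_atan; repeat split; auto; lra.
  - exists G; unfold normal_quad; rewrite tan_atan, e3_eq; repeat split; auto.
  - destruct (cartan_transport G _ _ _ _ _ _ HG G1 G2 G3) as [K [HK E]].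
    rewrite cartan_normal in E; exact (cartan_is_atan _ _ _ K tau HK E).
Qed.

Lemma equivQ_refl (q : Quad) : equivQ q q.
Proof. exists Idm; split; [exact unitary_Idm|]; rewrite !Idm_app; repeat split; apply sl_refl. Qed.

Lemma equivQ_sym (q q' : Quad) : equivQ q q' -> equivQ q' q.
Proof.
  intros [g [Hg [E1 [E2 [E3 E4]]]]]; exists (hinv g); split; [now apply hinv_unitary|].
  repeat split; rewrite <- (hinv_left g Hg); apply sl_Mapp, sl_sym; assumption.
Qed.

Lemma equivQ_trans (q q' q'' : Quad) : equivQ q q' -> equivQ q' q'' -> equivQ q q''.
Proof.
  intros [g [Hg [E1 [E2 [E3 E4]]]]] [g' [Hg' [F1 [F2 [F3 F4]]]]].
  exists (Mmul g' g); split; [now apply unitary_Mmul|].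
  rewrite !Mapp_Mmul; repeat split; eapply sl_trans; eauto using sl_Mapp.
Qed.

(** Two equivalent normal quadruples coincide: the comparing element fixes
    infinity and the origin, so [rigid] applies. *)
Lemma uniq_normal (q : Quad) (a : R) (z : C) (t a' : R) (z' : C) (t' : R) :
  normal_params a z t -> equivQ q (normal_quad a z t) ->
  normal_params a' z' t' -> equivQ q (normal_quad a' z' t') ->
  a = a' /\ z = z' /\ t = t'.
Proof.
  intros [Ha _] Hq [Ha' _] Hq'.
  destruct (equivQ_trans _ _ _ (equivQ_sym _ _ Hq) Hq') as [k [Hk [E1 [E2 [E3 E4]]]]].
  unfold normal_quad in *; cbn [q1 q2 q3 q4] in *; rewrite e3_eq in E3.
  destruct (rigid k (tan a) (tan a') z t z' t' Hk E2 E3 E1 E4) as [T ZT].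
  split; [|exact ZT].
  rewrite <- (atan_tan a), <- (atan_tan a'), T; auto.
Qed.

Lemma normal_in_C4pp (a : R) (z : C) (t : R) :
  normal_params a z t -> in_C4pp (normal_quad a z t).
Proof.
  intros [Ha [Hz Ht]]; unfold normal_quad, in_C4pp; cbn [q1 q2 q3 q4].
  assert (Hne : forall z1 t1 z2 t2, z1 <> z2 -> ~ same_line (bpt z1 t1) (bpt z2 t2))
    by (intros z1 t1 z2 t2 Hz12 H; now apply Hz12, (sl_bpt _ _ _ _ H)).
  split; [apply bpt_null|]; split; [apply binf_null|].
  split; [apply bpt_null|]; split; [apply bpt_null|].
  split; [apply sl_bpt_binf|]; split; [apply Hne, C1_neq_C0|].
  split; [intro H; apply Ht; destruct (sl_bpt _ _ _ _ H) as [<- ->]; rewrite Cnorm2_C1; ring|].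
  split; [apply sl_binf_bpt|]; split; [apply sl_binf_bpt|].
  split; [now apply Hne, not_eq_sym|].
  rewrite e3_eq; split; [|split].
  - apply not_Ccircle_first, c2_bpt_neq0, C1_neq_C0.
  - now apply not_Ccircle_last, c2_bpt_neq0.
  - intros [g [Hg [E2 [E3 E1]]]]; apply Ht.
    exact (stab_orbit_locus g (tan a) z t Hg E2 E3 E1).
Qed.

Lemma exp_tan_inj (a a' : R) : - (PI / 2) < a < PI / 2 -> - (PI / 2) < a' < PI / 2 ->
  exp (tan a) = exp (tan a') -> a = a'.
Proof.
  intros Ha Ha' E; apply exp_inv in E.
  rewrite <- (atan_tan a), <- (atan_tan a'), E; auto.
Qed.

Lemma normal_params_Cprime (a : R) (z : C) (t : R) :
  normal_params a z t -> in_Cprime z t (exp (tan a)).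
Proof.
  intros [_ [Hz Ht]]; pose proof (Cnorm2_pos z Hz) as P.
  split; [exact Hz | split; [apply exp_pos|]].
  rewrite ln_exp; intro H; apply Ht; rewrite H; field; lra.
Qed.

Lemma Cprime_normal_params (z : C) (t r : R) :
  in_Cprime z t r -> normal_params (atan (ln r)) z t /\ r = exp (tan (atan (ln r))).
Proof.
  intros [Hz [Hr Hl]]; pose proof (atan_bound (ln r)) as AB; pose proof (Cnorm2_pos z Hz) as P.
  rewrite tan_atan, exp_ln by exact Hr; split; [|reflexivity].
  split; [lra | split; [exact Hz|]].
  rewrite tan_atan; intro E; apply Hl; rewrite E; field; lra.
Qed.

Theorem theorem4p1 :
  (* every class contains a unique normal-form quadruple, with a = A(p1,p2,p3) *)
  (forall q : Quad, in_C4pp q ->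
     (exists a z t, normal_params a z t /\ equivQ q (normal_quad a z t) /\
        cartan_is (q1 q) (q2 q) (q3 q) a) /\
     (forall a z t a' z' t',
        normal_params a z t -> equivQ q (normal_quad a z t) ->
        normal_params a' z' t' -> equivQ q (normal_quad a' z' t') ->
        a = a' /\ z = z' /\ t = t')) /\
  (* B_0 is well defined and injective on classes *)
  (forall q q' z t r z' t' r', in_C4pp q -> in_C4pp q' ->
     B0rel q z t r -> B0rel q' z' t' r' ->
     (equivQ q q' <-> (z = z' /\ t = t' /\ r = r'))) /\
  (* B_0 takes values in C'(H-star) *)
  (forall q z t r, in_C4pp q -> B0rel q z t r -> in_Cprime z t r) /\
  (* B_0 is onto C'(H-star) *)
  (forall z t r, in_Cprime z t r -> exists q, in_C4pp q /\ B0rel q z t r).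
Proof.
  split; [|split; [|split]].
  - intros q Hq; split; [now apply exist_normal | intros; eapply uniq_normal; eauto].
  - intros q q' z t r z' t' r' _ _ [a [Pa [Ea ->]]] [a' [Pa' [Ea' ->]]]; split.
    + intro Hqq.
      destruct (uniq_normal q a z t a' z' t' Pa Ea Pa' (equivQ_trans _ _ _ Hqq Ea'))
        as [-> [-> ->]]; auto.
    + intros [-> [-> E]].
      rewrite (exp_tan_inj a a' (proj1 Pa) (proj1 Pa') E) in Ea.
      exact (equivQ_trans _ _ _ Ea (equivQ_sym _ _ Ea')).
  - intros q z t r _ [a [Pa [_ ->]]]; now apply normal_params_Cprime.
  - intros z t r Hc; destruct (Cprime_normal_params z t r Hc) as [P Er].
    exists (normal_quad (atan (ln r)) z t); split; [now apply normal_in_C4pp|].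
    exists (atan (ln r)); split; [exact P | split; [apply equivQ_refl | exact Er]].
Qed.
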